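(* Let $K\subseteq \mathbb{R}^k$ be compact and let $f:\mathbb{R}^k\to\mathbb{R}$ be $f(x)=d(x,K)$. Let $\epsilon\geq 0$ and $\delta>0$ be such that $2\delta+\epsilon<1$. Let $x\in\mathbb{R}^k$ and $r$ with $0<r<d(x,K)$, and suppose there are $z_1,z_2\in K$ with $d(x,z_1)\leq d(x,K)+\epsilon r$ and $d(x,z_2)\leq d(x,K)+\epsilon r$. Suppose that $f$ is $\delta$-coarsely differentiable on $B(x,r)$. Let $\theta$ be the angle between $[x,z_1]$ and $[x,z_2]$. Then $$|\theta|\leq \cos^{-1}\left(2\left(\frac{1-(2\delta+\epsilon)}{1+2\delta}\right)^2-1\right).$$
   Context: $d(p,q)=|p-q|$ is the Euclidean distance, $d(p,K)=\inf\{d(p,x):x\in K\}$, and $B(x,r)$ is the closed Euclidean ball of radius $r$ centered at $x$. A function $f:\mathbb{R}^k\to\mathbb{R}$ is $\delta$-coarsely differentiable on $B(x,r)$ if there is an affine function $\lambda:\mathbb{R}^k\to\mathbb{R}$ such that $|f(p)-\lambda(p)|\leq \delta r$ for all $p\in B(x,r)$. *)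

From HB Require Import structures.
From mathcomp Require Import all_boot all_order all_algebra.
From mathcomp Require Import all_classical all_reals all_analysis.
Set Implicit Arguments. Unset Strict Implicit. Unset Printing Implicit Defensive.
Import Order.TTheory GRing.Theory Num.Theory numFieldNormedType.Exports.
Local Open Scope ring_scope.
Local Open Scope classical_set_scope.

(* Euclidean inner product and norm on R^k (the library norm on 'rV is the sup norm). *)
Definition dotp {R : realType} {k : nat} (p q : 'rV[R]_k) : R :=
  \sum_(i < k) p ord0 i * q ord0 i.

Definition euclid_norm {R : realType} {k : nat} (p : 'rV[R]_k) : R :=
  Num.sqrt (dotp p p).

Definition euclid_dist {R : realType} {k : nat} (p q : 'rV[R]_k) : R := euclid_norm (p - q).

Definition dist_to_set {R : realType} {k : nat} (p : 'rV[R]_k) (K : set 'rV[R]_k) : R :=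
  inf [set euclid_dist p y | y in K].

Definition closed_eball {R : realType} {k : nat} (x : 'rV[R]_k) (r : R) : set 'rV[R]_k :=
  [set p | euclid_dist p x <= r].

Definition affine {R : realType} {k : nat} (lam : 'rV[R]_k -> R) : Prop :=
  exists (a : 'rV[R]_k) (b : R), forall p, lam p = dotp a p + b.

Definition coarsely_diff {R : realType} {k : nat} (delta : R)
    (f : 'rV[R]_k -> R) (x : 'rV[R]_k) (r : R) : Prop :=
  exists lam : 'rV[R]_k -> R, affine lam /\
    forall p, closed_eball x r p -> `|f p - lam p| <= delta * r.

Definition vangle {R : realType} {k : nat} (u v : 'rV[R]_k) : R :=
  acos (dotp u v / (euclid_norm u * euclid_norm v)).

From HB Require Import structures.
From mathcomp Require Import all_boot all_order all_algebra.
From mathcomp Require Import all_classical all_reals all_analysis.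
From mathcomp Require Import ring lra.
Import Order.TTheory GRing.Theory Num.Theory numFieldNormedType.Exports.
Set Implicit Arguments.
Unset Strict Implicit.
Unset Printing Implicit Defensive.

Local Open Scope ring_scope.
Local Open Scope classical_set_scope.

(* Let lam p = <a, p> + b approximate d(., K) on B(x, r) to within delta r.
   Since d(., K) is 1-Lipschitz, comparing x with x + r a/|a| gives
   |a| <= 1 + 2 delta.  Walking from x a distance r towards z_i lowers
   d(., K) by r up to the slack eps r, so <a, u_i> <= -(1 - (2 delta + eps))
   for the unit direction u_i of z_i - x.  Hence
   2 (1 - (2 delta + eps)) <= -<a, u_1 + u_2> <= (1 + 2 delta) |u_1 + u_2|,
   and |u_1 + u_2|^2 = 2 + 2 cos theta bounds cos theta from below. *)

Section Euclidean.
Variables (R : realType) (k : nat).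
Implicit Types (p q w : 'rV[R]_k) (t : R).

Lemma dotpC p q : dotp p q = dotp q p.
Proof. by apply: eq_bigr => i _; rewrite mulrC. Qed.

Lemma dotpDl p q w : dotp (p + q) w = dotp p w + dotp q w.
Proof. by rewrite /dotp -big_split; apply: eq_bigr => i _; rewrite mxE mulrDl. Qed.

Lemma dotpDr p q w : dotp w (p + q) = dotp w p + dotp w q.
Proof. by rewrite dotpC dotpDl !(dotpC w). Qed.

Lemma dotpZl t p q : dotp (t *: p) q = t * dotp p q.
Proof. by rewrite /dotp mulr_sumr; apply: eq_bigr => i _; rewrite mxE mulrA. Qed.

Lemma dotpZr t p q : dotp q (t *: p) = t * dotp q p.
Proof. by rewrite dotpC dotpZl dotpC. Qed.

Lemma dotpNl p q : dotp (- p) q = - dotp p q.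
Proof. by rewrite -scaleN1r dotpZl mulN1r. Qed.

Lemma dotpNr p q : dotp q (- p) = - dotp q p.
Proof. by rewrite dotpC dotpNl dotpC. Qed.

Lemma dotpBl p q w : dotp (p - q) w = dotp p w - dotp q w.
Proof. by rewrite dotpDl dotpNl. Qed.

Lemma dotpBr p q w : dotp w (p - q) = dotp w p - dotp w q.
Proof. by rewrite dotpDr dotpNr. Qed.

Lemma dotpp_ge0 p : 0 <= dotp p p.
Proof. by apply: sumr_ge0 => i _; rewrite -expr2 sqr_ge0. Qed.

Lemma dotp_sqr_le p q : dotp p q ^+ 2 <= dotp p p * dotp q q.
Proof.
set A := dotp p p; set B := dotp q q; set C := dotp p q.
have expand w1 w2 : dotp (w1 - w2) (w1 - w2) = dotp w1 w1 - 2 * dotp w1 w2 + dotp w2 w2.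
  by rewrite !(dotpBl, dotpBr) (dotpC w2 w1); ring.
have hB := dotpp_ge0 (B *: p - C *: q); have hA := dotpp_ge0 (C *: p - A *: q).
have hm := dotpp_ge0 (p - q); have hp := dotpp_ge0 (p - - q).
rewrite !expand !(dotpZl, dotpZr, dotpNl, dotpNr) -/A -/B -/C in hB hA hm hp.
have A0 := dotpp_ge0 p; have B0 := dotpp_ge0 q; rewrite -/A -/B in A0 B0.
(* B (AB - C^2) >= 0 and A (AB - C^2) >= 0; if A = B = 0, then |p -+ q|^2 >= 0 forces C = 0. *)
rewrite leNgt; apply/negP => neg_disc.
have {hB}B_eq0 : B = 0 by nra.
have {hA}A_eq0 : A = 0 by nra.
nra.
Qed.

Lemma enorm_ge0 p : 0 <= euclid_norm p.
Proof. exact: sqrtr_ge0. Qed.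

Lemma enorm_sqr p : euclid_norm p ^+ 2 = dotp p p.
Proof. by rewrite sqr_sqrtr // dotpp_ge0. Qed.

Lemma enormZ t p : euclid_norm (t *: p) = `|t| * euclid_norm p.
Proof.
by rewrite /euclid_norm dotpZl dotpZr mulrA -expr2 sqrtrM ?sqr_ge0 // sqrtr_sqr.
Qed.

Lemma enorm0 : euclid_norm (0 : 'rV[R]_k) = 0.
Proof. by rewrite -(scale0r (0 : 'rV[R]_k)) enormZ normr0 mul0r. Qed.

Lemma enormN p : euclid_norm (- p) = euclid_norm p.
Proof. by rewrite -scaleN1r enormZ normrN1 mul1r. Qed.

Lemma enormB p q : euclid_norm (p - q) = euclid_norm (q - p).
Proof. by rewrite -enormN opprB. Qed.

Lemma dotp_le_enorm p q : dotp p q <= euclid_norm p * euclid_norm q.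
Proof.
have npq_ge0 : 0 <= euclid_norm p * euclid_norm q by rewrite mulr_ge0 ?enorm_ge0.
apply: le_trans (ler_norm _) _; rewrite -ler_sqr ?nnegrE //.
by rewrite real_normK ?num_real // exprMn !enorm_sqr dotp_sqr_le.
Qed.

Lemma enormD p q : euclid_norm (p + q) <= euclid_norm p + euclid_norm q.
Proof.
rewrite -ler_sqr ?nnegrE ?addr_ge0 ?enorm_ge0 //.
rewrite enorm_sqr dotpDl !dotpDr (dotpC q p) -!enorm_sqr.
have := dotp_le_enorm p q; nra.
Qed.

Definition normalize p := (euclid_norm p)^-1 *: p.

Lemma enorm_normalize_le1 p : euclid_norm (normalize p) <= 1.
Proof.
rewrite enormZ ger0_norm ?invr_ge0 ?enorm_ge0 //.
by have [->|nz] := eqVneq (euclid_norm p) 0; rewrite ?invr0 ?mul0r // mulVf.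
Qed.

Lemma enorm_normalize p : 0 < euclid_norm p -> euclid_norm (normalize p) = 1.
Proof. by move=> p_gt0; rewrite enormZ ger0_norm ?invr_ge0 ?enorm_ge0 // mulVf ?gt_eqF. Qed.

Lemma dotp_normalize p : dotp p (normalize p) = euclid_norm p.
Proof.
rewrite dotpZr -enorm_sqr.
by have [->|nz] := eqVneq (euclid_norm p) 0; rewrite ?invr0 ?mul0r // expr2 mulKf.
Qed.

Lemma vangleE p q : vangle p q = acos (dotp (normalize p) (normalize q)).
Proof. by rewrite /vangle dotpZl dotpZr invfM mulrA mulrC. Qed.

End Euclidean.

Section DistanceToSet.
Variables (R : realType) (k : nat) (K : set 'rV[R]_k).
Implicit Types (p q x z : 'rV[R]_k).

Lemma dist_to_set_le p z : K z -> dist_to_set p K <= euclid_dist p z.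
Proof.
move=> Kz; apply: ge_inf; last by exists z.
by exists 0 => _ [y _ <-]; exact: enorm_ge0.
Qed.

Lemma dist_to_set_lipschitz z0 p q : K z0 ->
  dist_to_set p K <= euclid_dist p q + dist_to_set q K.
Proof.
move=> Kz0; rewrite -lerBlDl; apply: lb_le_inf; first by exists (euclid_dist q z0), z0.
move=> _ [z Kz <-]; rewrite lerBlDl; apply: le_trans (dist_to_set_le _ Kz) _.
rewrite /euclid_dist; have -> : p - z = (p - q) + (q - z) by rewrite addrA subrK.
exact: enormD.
Qed.

Lemma dist_to_set_segment x z t : K z -> 0 <= t <= 1 ->
  dist_to_set (x + t *: (z - x)) K <= (1 - t) * euclid_dist x z.
Proof.
move=> Kz /andP[t_ge0 t_le1]; apply: le_trans (dist_to_set_le _ Kz) _; rewrite /euclid_dist.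
have -> : x + t *: (z - x) - z = (1 - t) *: (x - z).
  by apply/rowP => j; rewrite !mxE; ring.
by rewrite enormZ ger0_norm // subr_ge0.
Qed.
End DistanceToSet.

Lemma unit_dotp_ge (R : realType) (k : nat) (a u v : 'rV[R]_k) (m N : R) :
  euclid_norm u = 1 -> euclid_norm v = 1 -> 0 <= m -> 0 < N -> euclid_norm a <= N ->
  dotp a u <= - m -> dotp a v <= - m -> 2 * (m / N) ^+ 2 - 1 <= dotp u v.
Proof.
move=> u1 v1 m_ge0 N_gt0 aN au av.
have sum_sqr : euclid_norm (u + v) ^+ 2 = 2 + 2 * dotp u v.
  by rewrite enorm_sqr dotpDl !dotpDr (dotpC v u) -!enorm_sqr u1 v1; ring.
have sum_ge : 2 * (m / N) <= euclid_norm (u + v).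
  rewrite mulrA ler_pdivrMr //.
  have := dotp_le_enorm (- a) (u + v); rewrite dotpNl dotpDr enormN.
  have := ler_wpM2r (enorm_ge0 (u + v)) aN; lra.
have := enorm_ge0 (u + v); have : 0 <= m / N := divr_ge0 m_ge0 (ltW N_gt0).
nra.
Qed.

Lemma acos_le (R : realType) (x y : R) : -1 <= x -> x <= y -> y <= 1 -> acos y <= acos x.
Proof.
move=> x_ge y_ge y_le; have x_le := le_trans y_ge y_le; have y_ge' := le_trans x_ge y_ge.
have acos_in t : -1 <= t -> t <= 1 -> acos t \in `[0, pi]%R.
  by move=> ? ?; rewrite in_itv /= acos_ge0 ?acos_lepi ?andbT //; apply/andP.
rewrite leNgt -ltr_cos ?acos_in // !acosK ?in_itv /= ?x_ge ?y_le ?y_ge' ?x_le //.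
by rewrite ltNge y_ge.
Qed.

Lemma closed_eball_center (R : realType) (k : nat) (x : 'rV[R]_k) (r : R) :
  0 <= r -> closed_eball x r x.
Proof. by rewrite /closed_eball /= /euclid_dist subrr enorm0. Qed.

Lemma closed_eball_shift (R : realType) (k : nat) (x w : 'rV[R]_k) (r : R) :
  0 <= r -> euclid_norm w <= 1 -> closed_eball x r (x + r *: w).
Proof.
move=> r_ge0 w_le1; rewrite /closed_eball /= /euclid_dist addrAC subrr add0r.
by rewrite enormZ ger0_norm // ler_piMr.
Qed.

Lemma affine_approx_increment (R : realType) (k : nat) (f : 'rV[R]_k -> R)
    (a : 'rV[R]_k) (b e : R) (p q : 'rV[R]_k) :
  `|f p - (dotp a p + b)| <= e -> `|f q - (dotp a q + b)| <= e ->
  dotp a (q - p) <= f q - f p + 2 * e.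
Proof. by rewrite dotpBr !ler_norml => /andP[? ?] /andP[? ?]; lra. Qed.

Section CoarseDistance.
Variables (R : realType) (k : nat) (K : set 'rV[R]_k) (x a : 'rV[R]_k) (b delta r : R).
Hypothesis r_gt0 : 0 < r.
Hypothesis approx : forall p, closed_eball x r p ->
  `|dist_to_set p K - (dotp a p + b)| <= delta * r.

Lemma coarse_slope_le w : euclid_norm w <= 1 ->
  r * dotp a w <= dist_to_set (x + r *: w) K - dist_to_set x K + 2 * (delta * r).
Proof.
move=> w_le1.
have -> : r * dotp a w = dotp a ((x + r *: w) - x) by rewrite addrC addKr dotpZr.
apply: (@affine_approx_increment _ _ (dist_to_set^~ K) a b); apply: approx.
  exact/closed_eball_center/ltW.
exact/closed_eball_shift/w_le1/ltW.
Qed.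

Lemma coarse_gradient_norm_le z0 : K z0 -> euclid_norm a <= 1 + 2 * delta.
Proof.
move=> Kz0; have := coarse_slope_le (enorm_normalize_le1 a).
rewrite dotp_normalize; set q := x + r *: normalize a => slope.
have q_near : euclid_dist q x <= r := closed_eball_shift x (ltW r_gt0) (enorm_normalize_le1 a).
have lip := dist_to_set_lipschitz q x Kz0.
rewrite -(ler_pM2l r_gt0); lra.
Qed.

Lemma coarse_slope_toward_near_point z eps : K z -> r <= dist_to_set x K ->
  euclid_dist x z <= dist_to_set x K + eps * r ->
  dotp a (normalize (z - x)) <= eps + 2 * delta - 1.
Proof.
move=> Kz r_le_dist z_near; set L := euclid_dist x z in z_near.
have dist_le_L : dist_to_set x K <= L := dist_to_set_le x Kz.
have L_gt0 : 0 < L := lt_le_trans r_gt0 (le_trans r_le_dist dist_le_L).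
have := coarse_slope_le (enorm_normalize_le1 (z - x)).
have -> : x + r *: normalize (z - x) = x + (r / L) *: (z - x).
  by rewrite /normalize enormB scalerA.
have t_in01 : 0 <= r / L <= 1.
  rewrite divr_ge0 ?(ltW r_gt0) ?(ltW L_gt0) //= ler_pdivrMr // mul1r.
  exact: le_trans r_le_dist dist_le_L.
have := dist_to_set_segment x Kz t_in01; rewrite -/L mulrBl mul1r divfK ?gt_eqF // => segment slope.
rewrite -(ler_pM2l r_gt0); lra.
Qed.

End CoarseDistance.

Theorem theorem3p1 (R : realType) (k : nat) (K : set 'rV[R]_k)
  (eps delta : R) (x z1 z2 : 'rV[R]_k) (r : R) :
  compact K ->
  0 <= eps -> 0 < delta -> 2 * delta + eps < 1 ->
  0 < r -> r < dist_to_set x K ->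
  K z1 -> K z2 ->
  euclid_dist x z1 <= dist_to_set x K + eps * r ->
  euclid_dist x z2 <= dist_to_set x K + eps * r ->
  coarsely_diff delta (fun p => dist_to_set p K) x r ->
  `| vangle (z1 - x) (z2 - x) | <=
    acos (2 * ((1 - (2 * delta + eps)) / (1 + 2 * delta)) ^+ 2 - 1).
Proof.
move=> _ eps_ge0 delta_gt0 small r_gt0 r_lt_dist Kz1 Kz2 z1_near z2_near.
case=> lam [[a [b lamE]] approx].
have {}approx p : closed_eball x r p ->
    `|dist_to_set p K - (dotp a p + b)| <= delta * r by move/approx; rewrite lamE.
have dir_unit z : K z -> euclid_norm (normalize (z - x)) = 1.
  move=> Kz; apply: enorm_normalize; rewrite enormB.
  exact: lt_trans r_gt0 (lt_le_trans r_lt_dist (dist_to_set_le x Kz)).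
have slope z : K z -> euclid_dist x z <= dist_to_set x K + eps * r ->
    dotp a (normalize (z - x)) <= - (1 - (2 * delta + eps)).
  move=> Kz z_near; have := coarse_slope_toward_near_point r_gt0 approx Kz (ltW r_lt_dist) z_near.
  lra.
have m_ge0 : 0 <= 1 - (2 * delta + eps) by lra.
have N_gt0 : 0 < 1 + 2 * delta by lra.
have cos_ge := unit_dotp_ge (dir_unit _ Kz1) (dir_unit _ Kz2) m_ge0 N_gt0
  (coarse_gradient_norm_le r_gt0 approx Kz1) (slope _ Kz1 z1_near) (slope _ Kz2 z2_near).
have cos_le1 := dotp_le_enorm (normalize (z1 - x)) (normalize (z2 - x)).
rewrite !dir_unit // mulr1 in cos_le1.
have bound_ge : -1 <= 2 * ((1 - (2 * delta + eps)) / (1 + 2 * delta)) ^+ 2 - 1.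
  by rewrite lerBrDr addNr mulr_ge0 ?sqr_ge0.
rewrite vangleE ger0_norm; first exact: acos_le.
by rewrite acos_ge0 // (le_trans bound_ge cos_ge).
Qed.
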